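(* Let $G=(V,E,\ell,\Phi)$ be a trackable weak model (not necessarily strongly connected). Let $T\ge 1$ and let $\pi_1,\pi_2,\pi_3:\{0,1,\dots,T\}\to V$ be walks (i.e. $(\pi_j(i),\pi_j(i+1))\in E$ for $0\le i<T$, $j=1,2,3$) such that: (1) $\ell(\pi_1(i))=\ell(\pi_2(i))=\ell(\pi_3(i))$ for all $0\le i\le T$; (2) $\pi_1(0)=\pi_1(T)=a$; (3) $\pi_2(0)=\pi_2(T)=b$ with $b\neq a$; (4) $\pi_3(0)=a$ and $\pi_3(T)=b$. Then every node $\pi_1(i)$, $0\le i\le T$, is transient. (In particular, since a trackable model with $n_G(t)$ not bounded by a constant possesses such a triple, in such a model the cycle $\pi_1$ consists only of transient nodes.)
   Context: A (single-colored) weak model $G=(V,E,\ell,\Phi)$ consists of a finite set of nodes $V$, directed edges $E\subseteq V\times V$, a finite color set $\Phi$ and a coloring $\ell:V\to\Phi$. A walk of length $t$ is a node sequence $(x_1,\dots,x_t)$ with $(x_i,x_{i+1})\in E$. For $Y_{[t]}\in\Phi^t$, $\mathcal H_G(Y_{[t]})$ is the set of walks $(x_1,\dots,x_t)$ with $\ell(x_i)=Y_i$ for all $i$, and $n_G(t)=\max_{Y_{[t]}}|\mathcal H_G(Y_{[t]})|$. $G$ is trackable if $n_G(t)=O(t^k)$ for some $k\ge0$. A node $j$ is accessible from node $i$ if there is a directed path (possibly of length zero) from $i$ to $j$. A node $i$ is recurrent if $i$ is accessible from every node $j$ that is accessible from $i$; otherwise $i$ is transient. It is known (from prior work) that for a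 trackable model either $n_G(t)=O(1)$ or there exist walks $\pi_1,\pi_2,\pi_3$ as in the statement. *)

From mathcomp Require Import all_boot.
Set Implicit Arguments. Unset Strict Implicit. Unset Printing Implicit Defensive.

Definition is_walk (V : finType) (E : rel V) (s : seq V) : bool :=
  if s is x :: s' then path E x s' else true.

Definition Hset (V Phi : finType) (E : rel V) (l : V -> Phi) (t : nat)
  (Y : t.-tuple Phi) : {set t.-tuple V} :=
  [set w : t.-tuple V | is_walk E w && (map l w == Y)].

Definition nG (V Phi : finType) (E : rel V) (l : V -> Phi) (t : nat) : nat :=
  \max_(Y : t.-tuple Phi) #|Hset E l Y|.

Definition trackable (V Phi : finType) (E : rel V) (l : V -> Phi) : Prop :=
  exists k C N : nat, forall t, N <= t -> nG E l t <= C * t ^ k.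

Definition recurrent (V : finType) (E : rel V) (i : V) : Prop :=
  forall j, connect E i j -> connect E j i.

Definition transient (V : finType) (E : rel V) (i : V) : Prop :=
  ~ recurrent E i.

From mathcomp Require Import all_boot zify.

(* If [pi1 i] were recurrent, then [b], reachable from [pi1 i] through [a],
   would lead back to [a] by some walk [q].  Following [q] and then either
   [pi1; pi3] or [pi3; pi2] gives two closed walks at [b] of the same length
   [M] with the same colors, passing through [a] and [b] respectively at time
   [|q| + T].  Concatenating [k] of them, freely chosen, yields [2^k] distinct
   walks of length [k M + 1] with a common color sequence, so [n_G] grows
   exponentially and [G] is not trackable. *)

Set Implicit Arguments. Unset Strict Implicit. Unset Printing Implicit Defensive.

Lemma exp2_dominates_poly C K N M :
  0 < M -> exists k, N <= k * M + 1 /\ C * (k * M + 1) ^ K < 2 ^ k.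
Proof.
move=> M_gt0.
have leq_exp2r' m n e : m <= n -> m ^ e <= n ^ e.
  by case: e => [|e] // le_mn; rewrite leq_exp2r.
set D := K.+1 * M; set r := C * D ^ K + N.
exists (r * K.+1).
have -> : r * K.+1 * M = r * D by rewrite /D mulnA.
split; first by nia.
apply: (@leq_trans (r.+1 ^ K.+1)); last first.
  by rewrite expnM; apply: leq_exp2r'; exact: ltn_expl.
apply: (@leq_ltn_trans (C * D ^ K * r.+1 ^ K)).
  by rewrite -mulnA -expnMn leq_mul2l leq_exp2r' ?orbT //; nia.
by rewrite expnSr [_ * r.+1]mulnC ltn_mul2r expn_gt0 /= /r; lia.
Qed.

Lemma divn_modn_small M q r : r < M -> (q * M + r) %/ M = q /\ (q * M + r) %% M = r.
Proof.
move=> lt_rM; have M_gt0 : 0 < M by lia.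
by rewrite divnMDl // modnMDl divn_small // modn_small // addn0.
Qed.

Section Walks.

Variables (V : finType) (E : rel V).

Definition walk_on (f : nat -> V) (n : nat) := forall i, i < n -> E (f i) (f i.+1).

Definition walk_tuple (f : nat -> V) (t : nat) : t.-tuple V :=
  Tuple (introT eqP (size_mkseq f t)).

Lemma is_walk_mkseq (f : nat -> V) t :
  (forall n, E (f n) (f n.+1)) -> is_walk E (mkseq f t).
Proof.
move=> f_edge; case: t => // t; rewrite /mkseq /= path_map.
by elim: t 0 => //= t IH m; rewrite IH f_edge.
Qed.

Lemma walk_on_connect (f : nat -> V) n i :
  walk_on f n -> i <= n -> connect E (f i) (f n).
Proof.
move=> f_walk; elim: n f_walk => [|n IH] f_walk le_in.
  by have -> : i = 0 by lia.
case: (ltnP i n.+1) => lt_in; last by have -> : i = n.+1 by lia.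
apply: connect_trans (IH _ _) (connect1 (f_walk _ _)) => // j lt_jn.
exact: f_walk (ltnW _).
Qed.

Lemma connect_walk_on x y :
  connect E x y -> exists n (f : nat -> V), [/\ f 0 = x, f n = y & walk_on f n].
Proof.
case/connectP => p p_path ->.
exists (size p), (nth x (x :: p)); split=> //; first by rewrite -last_nth.
by move=> i lt_ip; move/(pathP x): p_path; apply.
Qed.

Definition catw (f g : nat -> V) (L : nat) (n : nat) : V :=
  if n <= L then f n else g (n - L).

Lemma catw_left f g L n : n <= L -> catw f g L n = f n.
Proof. by rewrite /catw => ->. Qed.

Lemma catw_right f g L n : f L = g 0 -> L <= n -> catw f g L n = g (n - L).
Proof.
rewrite /catw => fg le_Ln; case: leqP => // le_nL.
have -> : n = L by lia.
by rewrite subnn.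
Qed.

Lemma catw_addl f g L n : f L = g 0 -> catw f g L (L + n) = g n.
Proof. by move=> fg; rewrite catw_right ?leq_addr // addKn. Qed.

Lemma walk_on_catw f g L M :
  f L = g 0 -> walk_on f L -> walk_on g M -> walk_on (catw f g L) (L + M).
Proof.
move=> fg f_walk g_walk n lt_n.
case: (ltnP n L) => le_nL.
  by rewrite !catw_left //; [exact: f_walk | exact: ltnW].
rewrite !catw_right ?(leqW le_nL) // subSn //; apply: g_walk; lia.
Qed.

Lemma catw_color (Phi : finType) (l : V -> Phi) f f' g g' L M n :
  (forall i, i <= L -> l (f i) = l (f' i)) ->
  (forall i, i <= M -> l (g i) = l (g' i)) ->
  n <= L + M -> l (catw f g L n) = l (catw f' g' L n).
Proof.
rewrite /catw => fl gl le_n; case: leqP => [/fl //|lt_Ln].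
apply: gl; lia.
Qed.

End Walks.

Section TwinCycles.

Variables (V Phi : finType) (E : rel V) (l : V -> Phi).
Variables (b : V) (M p : nat) (f0 f1 : nat -> V).
Hypotheses (M_gt0 : 0 < M) (f0_0 : f0 0 = b) (f1_0 : f1 0 = b).
Hypotheses (f0_M : f0 M = b) (f1_M : f1 M = b).
Hypotheses (f0_walk : walk_on E f0 M) (f1_walk : walk_on E f1 M).
Hypothesis f01_color : forall n, n <= M -> l (f0 n) = l (f1 n).
Hypotheses (lt_pM : p < M) (f01_p : f0 p <> f1 p).

Definition cycle_word (s : seq bool) (n : nat) : V :=
  if nth false s (n %/ M) then f1 (n %% M) else f0 (n %% M).

Lemma cycle_word_edge s n : E (cycle_word s n) (cycle_word s n.+1).
Proof.
have lt_rM : n %% M < M by rewrite ltn_mod.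
rewrite (divn_eq n M) /cycle_word; set q := n %/ M; set r := n %% M in lt_rM *.
have [-> ->] := divn_modn_small q lt_rM.
case: (ltnP r.+1 M) => lt_r1M.
  rewrite -addnS; have [-> ->] := divn_modn_small q lt_r1M.
  by case: ifP => _; [exact: f1_walk | exact: f0_walk].
have r1M : r.+1 = M by lia.
rewrite -addnS r1M -mulSnr mulnK // modnMl.
have := f0_walk lt_rM; have := f1_walk lt_rM; rewrite r1M f0_M f1_M.
by do 2!case: ifP => _; rewrite ?f0_0 ?f1_0.
Qed.

Lemma cycle_word_color s n : l (cycle_word s n) = l (f0 (n %% M)).
Proof.
rewrite /cycle_word; case: ifP => // _.
by rewrite f01_color // ltnW // ltn_mod.
Qed.

Lemma cycle_word_nth s q : cycle_word s (q * M + p) = if nth false s q then f1 p else f0 p.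
Proof. by rewrite /cycle_word; have [-> ->] := divn_modn_small q lt_pM. Qed.

Lemma exp2_leq_nG k : 2 ^ k <= nG E l (k * M + 1).
Proof.
set t := k * M + 1.
pose F (s : k.-tuple bool) := walk_tuple (cycle_word s) t.
have F_inj : injective F.
  move=> s s' /(congr1 val) /= eq_ss'; apply: eq_from_tnth => q.
  have := congr1 (nth b ^~ (q * M + p)) eq_ss'.
  have lt_qpt : q * M + p < t by have := ltn_ord q; rewrite /t; nia.
  rewrite !nth_mkseq // !cycle_word_nth -!tnth_nth.
  by case: (tnth s q); case: (tnth s' q) => // /esym.
pose Y := map_tuple l (walk_tuple (cycle_word [::]) t).
apply: (@leq_trans #|Hset E l Y|); last exact: leq_bigmax.
rewrite -card_bool -card_tuple -cardsT -(card_imset _ F_inj).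
apply/subset_leq_card/subsetP => _ /imsetP [s _ ->].
rewrite inE is_walk_mkseq; last exact: cycle_word_edge.
apply/eqP; rewrite /Y /= /mkseq -!map_comp; apply: eq_map => n /=.
by rewrite !cycle_word_color.
Qed.

Lemma twin_cycles_not_trackable : ~ trackable E l.
Proof.
move=> [K [C [N nG_poly]]].
have [k [le_N lt_2k]] := exp2_dominates_poly C K N M_gt0.
have := leq_trans (exp2_leq_nG k) (nG_poly _ le_N); lia.
Qed.

End TwinCycles.

Theorem corollary1 (V Phi : finType) (E : rel V) (l : V -> Phi)
  (T : nat) (pi1 pi2 pi3 : nat -> V) (a b : V) :
  trackable E l ->
  1 <= T ->
  (forall i, i < T -> [/\ E (pi1 i) (pi1 i.+1), E (pi2 i) (pi2 i.+1)
                        & E (pi3 i) (pi3 i.+1)]) ->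
  (forall i, i <= T -> l (pi1 i) = l (pi2 i) /\ l (pi2 i) = l (pi3 i)) ->
  pi1 0 = a -> pi1 T = a ->
  pi2 0 = b -> pi2 T = b -> b <> a ->
  pi3 0 = a -> pi3 T = b ->
  forall i, i <= T -> transient E (pi1 i).
Proof.
move=> + T_gt0 pi_walk pi_color pi1_0 pi1_T pi2_0 pi2_T ba pi3_0 pi3_T i le_iT rec_i.
have walk1 : walk_on E pi1 T by move=> j /pi_walk [].
have walk2 : walk_on E pi2 T by move=> j /pi_walk [].
have walk3 : walk_on E pi3 T by move=> j /pi_walk [].
have i_to_a : connect E (pi1 i) a by rewrite -pi1_T walk_on_connect.
have a_to_b : connect E a b by rewrite -pi3_0 -pi3_T walk_on_connect.
have [L [q [q_0 q_L q_walk]]] :=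
  connect_walk_on (connect_trans (rec_i _ (connect_trans i_to_a a_to_b)) i_to_a).
pose f0 := catw q (catw pi1 pi3 T) L; pose f1 := catw q (catw pi3 pi2 T) L.
have join13 : pi1 T = pi3 0 by congruence.
have join32 : pi3 T = pi2 0 by congruence.
have join_q1 : q L = catw pi1 pi3 T 0 by rewrite catw_left ?q_L.
have join_q3 : q L = catw pi3 pi2 T 0 by rewrite catw_left ?q_L.
apply: (@twin_cycles_not_trackable _ _ E l b (L + (T + T)) (L + T) f0 f1).
- lia.
- by rewrite /f0 catw_left.
- by rewrite /f1 catw_left.
- by rewrite /f0 !catw_addl.
- by rewrite /f1 !catw_addl.
- by apply: walk_on_catw => //; apply: walk_on_catw.
- by apply: walk_on_catw => //; apply: walk_on_catw.
- have color13 k : k <= T -> l (pi1 k) = l (pi3 k) by case/pi_color => -> ->.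
  have color32 k : k <= T -> l (pi3 k) = l (pi2 k) by case/pi_color => _ ->.
  move=> n le_n; apply: (catw_color (M := T + T)) => // j le_j.
  exact: (catw_color (M := T)).
- by rewrite ltn_add2l -addn1 leq_add2l.
- by rewrite /f0 /f1 !catw_addl // !catw_left // pi1_T pi3_T => /esym.
Qed.
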